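(* Let $a,b>-1$, $n\ge1$, $\lambda$ a partition with $\ell(\lambda)\le n$, and $\sigma=(a+b+1)/2$. Then $$\frac{\mathfrak P_\lambda(x_1,\dots,x_n;a,b)}{\mathfrak P_\lambda(1,\dots,1;a,b)}=\sum_{\mu}\frac{I_\mu(\lambda;1;\sigma+n)\,s_\mu(x_1-1,\dots,x_n-1)}{c(n,\mu;a)},$$ the sum over partitions $\mu$ with $\ell(\mu)\le n$, where $s_\mu$ is the Schur polynomial and $$c(n,\mu;a)=2^{|\mu|}\prod_{i=1}^n\frac{\Gamma(\mu_i+n-i+1)\,\Gamma(\mu_i+n-i+a+1)}{\Gamma(n-i+1)\,\Gamma(n-i+a+1)}.$$ Equivalently, with $l_i=\lambda_i+n-i+\sigma$, the numerator $I_\mu(\lambda;1;\sigma+n)$ equals the factorial Schur polynomial $s_\mu(l_1^2,\dots,l_n^2\mid \sigma^2,(\sigma+1)^2,(\sigma+2)^2,\dots)$.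
   Context: $\mathfrak p_l(x;a,b)=\frac{\Gamma(l+a+1)}{\Gamma(l+1)\Gamma(a+1)}{}_2F_1(-l,l+a+b+1;a+1;\frac{1-x}2)$ are the classical Jacobi polynomials; $\mathfrak P_\lambda(x_1,\dots,x_n;a,b)=\det_{1\le i,j\le n}[\mathfrak p_{\lambda_i+n-i}(x_j;a,b)]/\prod_{i<j}(x_i-x_j)$ (a polynomial, so its value at $(1,\dots,1)$ makes sense). For a sequence $A=(A_1,A_2,\dots)$, $(y\mid A)^m=(y-A_1)\cdots(y-A_m)$, $(y\mid A)^0=1$, and the factorial Schur polynomial is $s_\mu(y_1,\dots,y_n\mid A)=\det_{1\le i,j\le n}[(y_i\mid A)^{\mu_j+n-j}]/\prod_{i<j}(y_i-y_j)$. For $\theta=1$ the interpolation $BC_n$ polynomial is $I_\mu(x_1,\dots,x_n;1;h)=s_\mu\big((x_1+h-1)^2,\dots,(x_n+h-n)^2\mid (h-n)^2,(h-n+1)^2,(h-n+2)^2,\dots\big)$, and $I_\mu(\lambda;1;h_0)$ denotes its value at $x=\lambda$, $h=h_0$. *)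

From HB Require Import structures.
From mathcomp Require Import all_boot all_order all_algebra.
From mathcomp Require Import mpoly.
From Stdlib Require Import ClassicalEpsilon.

Set Implicit Arguments.
Unset Strict Implicit.
Unset Printing Implicit Defensive.

Import Order.TTheory GRing.Theory Num.Theory.
Local Open Scope ring_scope.

Section Defs.
Variable R : realFieldType.

(* rising factorial (c)_k = c (c+1) ... (c+k-1) = Gamma(c+k)/Gamma(c) *)
Definition poch (c : R) (k : nat) : R := \prod_(i < k) (c + i%:R).

(* Classical Jacobi polynomial p_l(t;a,b), with
   Gamma(l+a+1)/(Gamma(l+1)Gamma(a+1)) = (a+1)_l / l!  and the terminating
   hypergeometric series 2F1(-l, l+a+b+1; a+1; (1-t)/2)
   (terms with k > l vanish since (-l)_k = 0), evaluated at t in {mpoly R[n]}. *)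
Definition jacobi n (a b : R) (l : nat) (t : {mpoly R[n]}) : {mpoly R[n]} :=
  (poch (a + 1) l / (l`!)%:R) *:
  \sum_(k < l.+1)
     ((poch (- l%:R) k * poch (l%:R + a + b + 1) k) / (poch (a + 1) k * (k`!)%:R))
       *: ((2%:R)^-1 *: (1 - t)) ^+ k.

Definition vdm n : {mpoly R[n]} :=
  \prod_(i < n) \prod_(j < n | (i < j)%N) ('X_i - 'X_j).

(* The (unique) polynomial Q with Q * vdm = D, i.e. "D / prod_{i<j}(x_i - x_j)"
   as a polynomial. *)
Definition div_vdm n (D : {mpoly R[n]}) : {mpoly R[n]} :=
  epsilon (inhabits 0) (fun Q => Q * vdm n = D).

(* Jacobi polynomial in n variables:
   P_lambda = det[p_{lambda_i+n-i}(x_j)] / prod_{i<j}(x_i-x_j)   (0-based i) *)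
Definition JacobiP n (a b : R) (lam : 'I_n -> nat) : {mpoly R[n]} :=
  div_vdm (\det (\matrix_(i < n, j < n) jacobi a b (lam i + (n - i.+1)) 'X_j)).

(* (y | A)^m = (y - A_1) ... (y - A_m); A is 0-indexed: A 0 = A_1. *)
Definition fpow n (y : {mpoly R[n]}) (A : nat -> R) (m : nat) : {mpoly R[n]} :=
  \prod_(k < m) (y - (A k)%:MP).

Definition fschur n (mu : 'I_n -> nat) (A : nat -> R) : {mpoly R[n]} :=
  div_vdm (\det (\matrix_(i < n, j < n) fpow 'X_i A (mu j + (n - j.+1)))).

Definition schur n (mu : 'I_n -> nat) : {mpoly R[n]} :=
  div_vdm (\det (\matrix_(i < n, j < n) 'X_i ^+ (mu j + (n - j.+1)))).

(* I_mu(x;1;h) evaluated at x = x0, h = h0: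
   s_mu((x_1+h-1)^2,...,(x_n+h-n)^2 | (h-n)^2,(h-n+1)^2,...) *)
Definition Ieval n (mu : 'I_n -> nat) (x0 : 'I_n -> R) (h0 : R) : R :=
  (fschur mu (fun k => (h0 - n%:R + k%:R) ^+ 2)).@[fun i => (x0 i + h0 - (i.+1)%:R) ^+ 2].

(* c(n,mu;a) = 2^|mu| prod_i Gamma(mu_i+n-i+1)Gamma(mu_i+n-i+a+1)
                              / (Gamma(n-i+1)Gamma(n-i+a+1)) *)
Definition cnorm n (mu : 'I_n -> nat) (a : R) : R :=
  2%:R ^+ (\sum_(i < n) mu i) *
  \prod_(i < n) (poch ((n - i.+1)%:R + 1) (mu i) * poch ((n - i.+1)%:R + a + 1) (mu i)).

End Defs.

(* a partition with at most n parts, as a weakly decreasing n-vector *)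
Definition is_partition n (mu : 'I_n -> nat) : bool :=
  [forall i : 'I_n, forall j : 'I_n, (i <= j)%N ==> (mu j <= mu i)%N].

Definition ffnat n N (m : {ffun 'I_n -> 'I_N}) : 'I_n -> nat := fun i => (m i : nat).

From HB Require Import structures.
From mathcomp Require Import all_boot all_order all_fingroup all_algebra.
From mathcomp Require Import mpoly zify ring lra.
From Stdlib Require Import ClassicalEpsilon.

Set Implicit Arguments.
Unset Strict Implicit.
Unset Printing Implicit Defensive.

Import Order.TTheory GRing.Theory Num.Theory.
Local Open Scope ring_scope.

(* Write each one-variable Jacobi polynomial as a polynomial in t - 1: by
   (-l)_k (l+a+b+1)_k (-1)^k = prod_(j<k) ((l+s)^2 - (s+j)^2), with s = (a+b+1)/2,
   the coefficient of (t-1)^k in p_l is p_l(1) times a factorial power of (l+s)^2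
   in the squares (s+j)^2, divided by 2^k k! (a+1)_k. The alternant
   det[p_(lambda_i+n-i)(x_j)] is thus det (W C) with W = [(x_j - 1)^k], and the
   Cauchy-Binet formula expands it over the strictly decreasing column choices
   g, i.e. over partitions mu with g_j = mu_j + n - j. The W-minor divided by the
   Vandermonde is s_mu(x - 1), the C-minor is, up to row and column scalings,
   the alternant of the factorial Schur polynomial at the l_i^2. At x = 1 only
   mu = 0 survives since s_mu is homogeneous of degree |mu|, and the row
   scalings of the quotient assemble into c(n, mu; a). *)

Section Vandermonde.
Variables (A : comNzRingType) (n : nat) (x : 'I_n -> A).

Definition newton_poly (m : nat) : {poly A} :=
  \prod_(l < n | (l < m)%N) ('X - (x l)%:P).

Lemma newton_poly0 : newton_poly 0 = 1.
Proof. by rewrite /newton_poly big1 // => l; rewrite ltn0. Qed.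

Lemma newton_polyS k (hk : (k < n)%N) :
  newton_poly k.+1 = newton_poly k * ('X - (x (Ordinal hk))%:P).
Proof.
rewrite /newton_poly (bigD1 (Ordinal hk)) //= mulrC; congr (_ * _).
by apply: eq_bigl => l; rewrite ltnS andbC -(inj_eq val_inj) /= -ltn_neqAle.
Qed.

Lemma newton_poly_root m (i : 'I_n) : (i < m)%N -> (newton_poly m).[x i] = 0.
Proof.
move=> im; rewrite /newton_poly horner_prod (bigD1 i) //=.
by rewrite hornerD hornerN hornerX hornerC subrr mul0r.
Qed.

Lemma newton_expansion (p : {poly A}) k : (k <= n)%N ->
  exists (d : nat -> A) (r : {poly A}),
    p = \sum_(m < k) (d m)%:P * newton_poly m + r * newton_poly k.
Proof.
elim: k => [|k IH] hk.
  by exists (fun _ => 0), p; rewrite big_ord0 add0r newton_poly0 mulr1.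
have [d [r ->]] := IH (ltnW hk).
set xk := x (Ordinal hk); set c := r.[xk].
have /factor_theorem [q eq] : root (r - c%:P) xk.
  by rewrite /root hornerD hornerN hornerC subrr.
exists (fun m => if m == k then c else d m), q.
rewrite big_ord_recr /= eqxx newton_polyS -addrA; congr (_ + _).
  by apply: eq_bigr => m _; rewrite ltn_eqF.
have er : r = q * ('X - xk%:P) + c%:P by rewrite -eq subrK.
by rewrite er; ring.
Qed.

Lemma horner_newton_expansion (p : {poly A}) : exists d : 'I_n -> A,
  forall i : 'I_n, p.[x i] = \sum_(m < n) d m * (newton_poly m).[x i].
Proof.
have [d [r e]] := newton_expansion p (leqnn n).
exists (fun m => d m) => i.
rewrite e hornerD hornerM newton_poly_root // mulr0 addr0 horner_sum.
by apply: eq_bigr => m _; rewrite hornerM hornerC.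
Qed.

Definition vandermonde : A := \prod_(i < n) \prod_(j < n | (i < j)%N) (x i - x j).

Lemma det_newton_poly : exists s : A, s * s = 1 /\
  \det (\matrix_(i < n, m < n) (newton_poly m).[x i]) = s * vandermonde.
Proof.
exists (\prod_(i < n) \prod_(j < n | (i < j)%N) (-1)); split.
  rewrite -big_split /=; apply: big1 => i _; rewrite -big_split /=.
  by apply: big1 => j _; rewrite mulrNN mulr1.
rewrite det_trig; last first.
  by apply/is_trig_mxP => i j ij; rewrite mxE newton_poly_root.
rewrite (eq_bigr (fun i : 'I_n => \prod_(l < n | (l < i)%N) (x i - x l))); last first.
  move=> i _; rewrite mxE /newton_poly horner_prod; apply: eq_bigr => l _.
  by rewrite hornerD hornerN hornerX hornerC.
rewrite (exchange_big_dep predT) //= /vandermonde -big_split /=.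
apply: eq_bigr => l _; rewrite -big_split /=; apply: eq_bigr => i _.
by rewrite mulN1r opprB.
Qed.

(* Expanding every column in the Newton basis factors the alternant through the
   triangular matrix of det_newton_poly. *)
Lemma vandermonde_dvd_alternant (F : 'I_n -> {poly A}) : exists Q : A,
  Q * vandermonde = \det (\matrix_(i < n, j < n) (F j).[x i]).
Proof.
have /fin_all_exists [d hd] : forall j : 'I_n, exists d : 'I_n -> A,
    forall i : 'I_n, (F j).[x i] = \sum_(m < n) d m * (newton_poly m).[x i].
  by move=> j; apply: horner_newton_expansion.
have [s [ss hs]] := det_newton_poly.
have -> : \matrix_(i < n, j < n) (F j).[x i] =
    (\matrix_(i < n, m < n) (newton_poly m).[x i]) *m (\matrix_(m < n, j < n) d j m).
  apply/matrixP => i j; rewrite !mxE hd; apply: eq_bigr => m _.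
  by rewrite !mxE mulrC.
rewrite det_mulmx hs; exists (s * \det (\matrix_(m < n, j < n) d j m)).
by rewrite mulrAC.
Qed.

Lemma det_powers : \det (\matrix_(i < n, j < n) x i ^+ (n - j.+1)) = vandermonde.
Proof.
pose rv : 'S_n := perm (@rev_ord_inj n).
have e : (\matrix_(i < n, j < n) x i ^+ (n - j.+1))^T =
    row_perm rv (col_perm rv (Vandermonde n (\row_c x (rev_ord c)))).
  by apply/matrixP => j i; rewrite !mxE !permE rev_ordK.
rewrite -det_tr e row_permE col_permE !det_mulmx !det_perm odd_permV.
rewrite mulrCA -signr_addb addbb expr0 mulr1 det_Vandermonde /vandermonde.
rewrite !(pair_big_dep xpredT (fun i j : 'I_n => (i < j)%N)) /=.
rewrite (reindex_inj (h := fun p : 'I_n * 'I_n => (rev_ord p.2, rev_ord p.1))) /=.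
  apply: eq_big => [[i j]|[i j] _] /=; last by rewrite !mxE !rev_ordK.
  by case: i j => [i hi] [j hj] /=; apply/idP/idP => h; lia.
move=> [i1 i2] [j1 j2] /= /eqP; rewrite xpair_eqE.
by case/andP=> /eqP/rev_ord_inj -> /eqP/rev_ord_inj ->.
Qed.

End Vandermonde.

Section SortFfun.
Variables n K : nat.

Definition strict_decr (g : {ffun 'I_n -> 'I_K}) : bool :=
  [forall i : 'I_n, forall j : 'I_n, (i < j)%N ==> (g j < g i)%N].

Definition ord_ge : rel 'I_K := fun i j => (j <= i)%N.

Lemma ord_ge_total : total ord_ge.
Proof. by move=> i j; rewrite /ord_ge leq_total. Qed.

Lemma ord_ge_trans : transitive ord_ge.
Proof. by move=> j i k; rewrite /ord_ge => ji kj; exact: leq_trans kj ji. Qed.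

Lemma ord_ge_anti : antisymmetric ord_ge.
Proof. by move=> i j /andP[ji ij]; apply/val_inj/eqP; rewrite eqn_leq; apply/andP. Qed.

Implicit Types (f g : {ffun 'I_n -> 'I_K}) (s : 'S_n).

Definition sorted_values f := sort ord_ge (map f (enum 'I_n)).

Definition sort_ffun f : {ffun 'I_n -> 'I_K} := [ffun j => nth (f j) (sorted_values f) j].
Definition sort_rank f (i : 'I_n) : 'I_n := insubd i (index (f i) (sorted_values f)).
Definition sort_perm f : 'S_n :=
  odflt 1%g [pick s : 'S_n | [forall i, s i == sort_rank f i]].

Definition comp_perm (p : {ffun 'I_n -> 'I_K} * 'S_n) : {ffun 'I_n -> 'I_K} :=
  [ffun i => p.1 (p.2 i)].

Lemma size_sorted_values f : size (sorted_values f) = n.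
Proof. by rewrite size_sort size_map size_enum_ord. Qed.

Lemma mem_sorted_values f i : f i \in sorted_values f.
Proof. by rewrite mem_sort; apply: map_f; rewrite mem_enum. Qed.

Lemma val_sort_rank f i : (sort_rank f i : nat) = index (f i) (sorted_values f).
Proof.
rewrite /sort_rank val_insubd -[X in (_ < X)%N](size_sorted_values f).
by rewrite index_mem mem_sorted_values.
Qed.

Lemma sort_ffun_rank f i : sort_ffun f (sort_rank f i) = f i.
Proof. by rewrite ffunE val_sort_rank nth_index // mem_sorted_values. Qed.

Lemma sort_rank_inj f : injectiveb f -> injective (sort_rank f).
Proof.
move=> fi i j eq_ij; have := congr1 (sort_ffun f) eq_ij.
by rewrite !sort_ffun_rank => /(injectiveP _ fi).
Qed.

Lemma sort_permE f : injectiveb f -> forall i, sort_perm f i = sort_rank f i.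
Proof.
move=> fi; rewrite /sort_perm; case: pickP => [s /forallP hs i|]; first exact/eqP.
by move=> /(_ (perm (sort_rank_inj fi))) /forallP; case=> i; rewrite permE.
Qed.

Lemma comp_perm_sort f : injectiveb f -> comp_perm (sort_ffun f, sort_perm f) = f.
Proof. by move=> fi; apply/ffunP => i; rewrite ffunE /= sort_permE // sort_ffun_rank. Qed.

Lemma strict_decr_sort_ffun f : injectiveb f -> strict_decr (sort_ffun f).
Proof.
move=> fi; apply/forallP=> i; apply/forallP=> j; apply/implyP=> lij.
have [hi hj] : (i < size (sorted_values f))%N /\ (j < size (sorted_values f))%N.
  by rewrite size_sorted_values !ltn_ord.
rewrite !ffunE (set_nth_default (f i) (f j) hj).
have := sorted_ltn_nth ord_ge_trans (f i) (sort_sorted ord_ge_total (map f (enum 'I_n))) i j.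
move=> /(_ hi hj lij); rewrite /ord_ge leq_eqVlt => /orP[/eqP e|//].
have uniq_vals : uniq (sorted_values f).
  by rewrite sort_uniq map_inj_uniq ?enum_uniq //; apply/injectiveP.
have : nth (f i) (sorted_values f) i == nth (f i) (sorted_values f) j.
  by rewrite -(inj_eq val_inj) /= e.
by rewrite nth_uniq // => /eqP ij; rewrite ij ltnn in lij.
Qed.

Lemma strict_decr_inj g : strict_decr g -> injectiveb g.
Proof.
move=> /forallP dg; apply/injectiveP=> i j eq_ij; apply/val_inj/eqP.
case: (ltngtP i j) => // lij.
  by have := implyP (forallP (dg i) j) lij; rewrite eq_ij ltnn.
by have := implyP (forallP (dg j) i) lij; rewrite eq_ij ltnn.
Qed.

Lemma comp_perm_inj g s : strict_decr g -> injectiveb (comp_perm (g, s)).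
Proof.
move=> /strict_decr_inj /injectiveP gi; apply/injectiveP=> i j.
by rewrite !ffunE => /gi /perm_inj.
Qed.

Lemma sorted_strict_decr g : strict_decr g -> sorted ord_ge (map g (enum 'I_n)).
Proof.
move=> /forallP dg; rewrite sorted_map.
have : sorted (relpre val ltn) (enum 'I_n).
  by rewrite -sorted_map val_enum_ord iota_ltn_sorted.
apply: sub_sorted => i j /= lij.
exact: ltnW (implyP (forallP (dg i) j) lij).
Qed.

Lemma sorted_values_comp_perm g s :
  strict_decr g -> sorted_values (comp_perm (g, s)) = map g (enum 'I_n).
Proof.
move=> dg; rewrite /sorted_values -(sorted_sort ord_ge_trans (sorted_strict_decr dg)).
apply/(perm_sortP ord_ge_total ord_ge_trans ord_ge_anti).
have -> : map (comp_perm (g, s)) (enum 'I_n) = map g (map s (enum 'I_n)).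
  by rewrite -[RHS]map_comp; apply: eq_map => i; rewrite /= ffunE.
apply: perm_map; apply: uniq_perm; rewrite ?enum_uniq ?map_inj_uniq ?enum_uniq //.
- by rewrite -enumT enum_uniq.
- exact: perm_inj.
move=> i; rewrite [RHS]mem_enum; apply/mapP.
by exists (s^-1 i)%g; rewrite ?mem_enum ?permKV.
Qed.

Lemma sort_ffun_comp_perm g s : strict_decr g -> sort_ffun (comp_perm (g, s)) = g.
Proof.
move=> dg; apply/ffunP=> j; rewrite ffunE sorted_values_comp_perm //.
by rewrite (nth_map j) ?size_enum_ord // nth_ord_enum.
Qed.

Lemma sort_perm_comp_perm g s : strict_decr g -> sort_perm (comp_perm (g, s)) = s.
Proof.
move=> dg; apply/permP=> i; rewrite sort_permE ?comp_perm_inj //; apply/val_inj.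
rewrite /= val_sort_rank sorted_values_comp_perm // ffunE /=.
by rewrite index_map ?index_enum_ord //; apply/injectiveP/strict_decr_inj.
Qed.

End SortFfun.

Section CauchyBinet.
Variables (R : comPzRingType) (n K : nat).

Lemma det_mulmx_sum_ffun (W : 'M[R]_(n, K)) (C : 'M[R]_(K, n)) :
  \det (W *m C) =
    \sum_(f : {ffun 'I_n -> 'I_K}) (\prod_i W i (f i)) * \det (rowsub f C).
Proof.
transitivity (\sum_(s : 'S_n) \sum_(f : {ffun 'I_n -> 'I_K})
    (-1) ^+ s * ((\prod_i W i (f i)) * \prod_i C (f i) (s i))).
  apply: eq_bigr => s _; rewrite -big_distrr /=; congr (_ * _).
  rewrite (eq_bigr (fun i => \sum_k W i k * C k (s i))); last by move=> i _; rewrite mxE.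
  by rewrite bigA_distr_bigA; apply: eq_bigr => f _; rewrite big_split.
rewrite exchange_big; apply: eq_bigr => f _ /=.
rewrite [\det (rowsub f C)]/(\det _) big_distrr; apply: eq_bigr => s _ /=.
by rewrite mulrCA; congr (_ * (_ * _)); apply: eq_bigr => i _; rewrite mxE.
Qed.

(* Non-injective f give alternating minors; an injective f is a strictly
   decreasing g composed with a permutation s, and summing over s rebuilds
   \det (colsub g W). *)
Lemma cauchy_binet (W : 'M[R]_(n, K)) (C : 'M[R]_(K, n)) :
  \det (W *m C) = \sum_(g : {ffun 'I_n -> 'I_K} | strict_decr g)
     \det (colsub g W) * \det (rowsub g C).
Proof.
rewrite det_mulmx_sum_ffun (bigID (fun f : {ffun 'I_n -> 'I_K} => injectiveb f)) /=.
rewrite [X in _ + X]big1 ?addr0; last first.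
  move=> f /injectivePn [i1 [i2 ne12 e12]].
  by rewrite (determinant_alternate ne12) ?mulr0 // => j; rewrite !mxE e12.
rewrite (reindex_onto (@comp_perm n K) (fun f => (sort_ffun f, sort_perm f)));
  last by move=> f; apply: comp_perm_sort.
rewrite (eq_bigl (fun p => strict_decr p.1 && true)); last first.
  case=> g s /=; rewrite andbT; apply/idP/idP.
    by case/andP=> fi /eqP [<- _]; exact: strict_decr_sort_ffun.
  move=> dg; rewrite comp_perm_inj //=.
  by rewrite sort_ffun_comp_perm // sort_perm_comp_perm.
rewrite [RHS](eq_bigr (fun g => \sum_(s : 'S_n)
    (\prod_i W i (comp_perm (g, s) i)) * \det (rowsub (comp_perm (g, s)) C))).
  by rewrite pair_big_dep /=; apply: eq_bigr; case.
move=> g dg; rewrite [\det (colsub g W)]/(\det _) big_distrl.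
apply: eq_bigr => s _ /=.
have -> : rowsub (comp_perm (g, s)) C = row_perm s (rowsub g C).
  by apply/matrixP=> i j; rewrite !mxE ffunE.
rewrite row_permE det_mulmx det_perm mulrCA mulrA; congr (_ * _).
by congr (_ * _); apply: eq_bigr => i _; rewrite !mxE ffunE.
Qed.

End CauchyBinet.

Section ShiftPartition.
Variables n N : nat.

Lemma strict_decr_gap K (g : {ffun 'I_n -> 'I_K}) : strict_decr g ->
  forall i j : 'I_n, (i <= j)%N -> (g j + (j - i) <= g i)%N.
Proof.
move=> /forallP dg.
suff H d (i j : 'I_n) : (j : nat) = (i + d)%N -> (g j + d <= g i)%N.
  by move=> i j ij; apply: H; lia.
elim: d i j => [|d IH] i j ej.
  have ji : j = i by apply: val_inj; rewrite /= ej addn0.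
  by rewrite ji addn0.
have hj' : (i + d < n)%N by have := ltn_ord j; lia.
have := IH i (Ordinal hj') erefl.
have lt_j : (Ordinal hj' < j)%N by rewrite /= ej; lia.
by have := implyP (forallP (dg (Ordinal hj')) j) lt_j; lia.
Qed.

Lemma shift_part_lt (m : {ffun 'I_n -> 'I_N.+1}) (j : 'I_n) :
  (m j + (n - j.+1) < N + n)%N.
Proof. by have := ltn_ord (m j); have := ltn_ord j; lia. Qed.

(* mu |-> mu + rho, rho = (n-1, ..., 1, 0): partitions with parts at most N
   correspond to strictly decreasing maps into 'I_(N + n). *)
Definition shift_part (m : {ffun 'I_n -> 'I_N.+1}) : {ffun 'I_n -> 'I_(N + n)} :=
  [ffun j => Ordinal (shift_part_lt m j)].

Definition unshift_part (g : {ffun 'I_n -> 'I_(N + n)}) : {ffun 'I_n -> 'I_N.+1} :=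
  [ffun j => inord (g j - (n - j.+1))].

Lemma shift_partE m j : (shift_part m j : nat) = (m j + (n - j.+1))%N.
Proof. by rewrite ffunE. Qed.

Lemma strict_decr_shift_part m : strict_decr (shift_part m) = is_partition (ffnat m).
Proof.
apply/idP/idP => [dg | /forallP hp].
  apply/forallP => i; apply/forallP => j; apply/implyP => ij.
  have := strict_decr_gap dg ij; rewrite !shift_partE /ffnat.
  by have := ltn_ord i; have := ltn_ord j; lia.
apply/forallP => i; apply/forallP => j; apply/implyP => ij.
have := implyP (forallP (hp i) j) (ltnW ij); rewrite !shift_partE /ffnat.
by have := ltn_ord i; have := ltn_ord j; lia.
Qed.

Lemma shift_partK : cancel shift_part unshift_part.
Proof.
by move=> m; apply/ffunP => j; rewrite ffunE shift_partE addnK; apply: val_inj; rewrite /= inordK.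
Qed.

Lemma unshift_partK g : strict_decr g -> shift_part (unshift_part g) = g.
Proof.
move=> dg; apply/ffunP => j; apply: val_inj; rewrite /= shift_partE ffunE.
have n_gt0 : (0 < n)%N by have := ltn_ord j; lia.
have top := strict_decr_gap dg (i := Ordinal n_gt0) (j := j) (leq0n j).
have last_lt : (n.-1 < n)%N by rewrite ltn_predL.
have bot := strict_decr_gap dg (i := j) (j := Ordinal last_lt)
  ltac:(rewrite /=; have := ltn_ord j; lia).
have := ltn_ord (g (Ordinal n_gt0)); have := ltn_ord j; rewrite /= in top bot.
by move=> *; rewrite inordK; lia.
Qed.

Lemma sum_strict_decr_partition (V : nmodType) (F : {ffun 'I_n -> 'I_(N + n)} -> V) :
  \sum_(g | strict_decr g) F g =
  \sum_(m : {ffun 'I_n -> 'I_N.+1} | is_partition (ffnat m)) F (shift_part m).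
Proof.
rewrite (reindex_onto shift_part unshift_part) => [|g]; last exact: unshift_partK.
by apply: eq_bigl => m; rewrite shift_partK eqxx andbT strict_decr_shift_part.
Qed.

Definition part0 : {ffun 'I_n -> 'I_N.+1} := [ffun => ord0].

Lemma is_partition0 : is_partition (ffnat part0).
Proof. by apply/forallP => i; apply/forallP => j; rewrite /ffnat !ffunE leqnn implybT. Qed.

Lemma sum_part_gt0 m : m != part0 -> (0 < \sum_(j < n) ffnat m j)%N.
Proof.
move=> hm; case: (pickP (fun j => ffnat m j != 0%N)) => [j hj|h0].
  by rewrite (bigD1 j) //= ltn_addr // lt0n.
case/negP: hm; apply/eqP/ffunP => j; apply: val_inj; rewrite ffunE /=.
by have /negbFE/eqP := h0 j.
Qed.

End ShiftPartition.

Section AlternantQuotients.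
Variables (R : realFieldType) (n : nat).
Notation MP := {mpoly R[n]}.

Lemma vdm_neq0 : vdm R n != 0.
Proof.
apply/prodf_neq0 => i _; apply/prodf_neq0 => j ij; apply/negP => /eqP h.
have := congr1 (meval (fun k => if k == i then 1 else 0)) h.
rewrite mevalB !mevalXU eqxx meval0 (_ : (j == i) = false) ?subr0; last first.
  by apply/negbTE; rewrite neq_ltn ij orbT.
by move/eqP; rewrite oner_eq0.
Qed.

Lemma div_vdm_eq (D Q : MP) : Q * vdm R n = D -> div_vdm D = Q.
Proof.
move=> hQ; have := epsilon_spec (inhabits 0) (fun Q => Q * vdm R n = D) (ex_intro _ Q hQ).
by rewrite -hQ => /(mulIf vdm_neq0).
Qed.

Definition hornerMP (p : {poly R}) (t : MP) : MP := (map_poly (@mpolyC n R) p).[t].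

Lemma div_vdmK (M : 'M[MP]_n) (G : 'I_n -> {poly R}) :
  (forall i j, M i j = hornerMP (G j) 'X_i) -> div_vdm (\det M) * vdm R n = \det M.
Proof.
move=> hM.
have [Q hQ] := vandermonde_dvd_alternant (fun i : 'I_n => 'X_i)
  (fun j => map_poly (@mpolyC n R) (G j)).
have -> : M = \matrix_(i, j) (map_poly (@mpolyC n R) (G j)).['X_i].
  by apply/matrixP => i j; rewrite mxE hM.
by rewrite -hQ (div_vdm_eq (Q := Q)).
Qed.

Lemma hornerMP_Xn k t : hornerMP 'X^k t = t ^+ k.
Proof. by rewrite /hornerMP map_polyXn hornerXn. Qed.

Lemma hornerMP_fpow (A : nat -> R) k t :
  hornerMP (\prod_(l < k) ('X - (A l)%:P)) t = fpow t A k.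
Proof.
rewrite /hornerMP rmorph_prod horner_prod; apply: eq_bigr => l _.
by rewrite rmorphB /= map_polyX map_polyC hornerD hornerN hornerX hornerC.
Qed.

Lemma hornerMP_sum_shift K (c : nat -> R) t :
  hornerMP (\sum_(k < K) c k *: ('X - 1) ^+ k) t = \sum_(k < K) c k *: (t - 1) ^+ k.
Proof.
rewrite /hornerMP rmorph_sum horner_sum; apply: eq_bigr => k _.
rewrite /= map_polyZ hornerZ rmorphXn rmorphB /= map_polyX rmorph1 horner_exp.
by rewrite hornerD hornerN hornerX hornerC mul_mpolyC.
Qed.

(* Columns of degree < n - j with unit coefficient in degree n - j - 1 make a
   unitriangular change of basis from the monomial alternant. *)
Lemma det_unitriangular_alternant (G : 'I_n -> {poly R}) :
  (forall j : 'I_n, (size (G j) <= n - j)%N) ->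
  (forall j : 'I_n, (G j)`_(n - j.+1) = 1) ->
  \det (\matrix_(i < n, j < n) hornerMP (G j) 'X_i) = vdm R n.
Proof.
move=> hs hc.
have -> : \matrix_(i < n, j < n) hornerMP (G j) 'X_i =
    (\matrix_(i < n, k < n) ('X_i : MP) ^+ (n - k.+1)) *m
    (\matrix_(k < n, j < n) ((G j)`_(n - k.+1))%:MP).
  apply/matrixP => i j; rewrite !mxE /hornerMP (horner_coef_wide _ (_ : (_ <= n)%N)).
    rewrite (reindex_inj (@rev_ord_inj n)) /=; apply: eq_bigr => k _.
    by rewrite !mxE coef_map /= mulrC.
  by rewrite size_map_poly (leq_trans (hs j)) // leq_subr.
rewrite det_mulmx det_powers det_trig; last first.
  apply/is_trig_mxP => k j kj; rewrite mxE nth_default ?mpolyC0 //.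
  by apply: leq_trans (hs j) _; case: k j kj => [k hk] [j hj] /= kj; lia.
by rewrite big1 ?mulr1 // => j _; rewrite mxE hc.
Qed.

Lemma size_monic_fpow (A : nat -> R) k :
  size (\prod_(l < k) ('X - (A l)%:P)) = k.+1 /\
  \prod_(l < k) ('X - (A l)%:P) \is monic.
Proof.
elim: k => [|k [IH1 IH2]]; first by rewrite big_ord0 size_poly1 monic1.
rewrite big_ord_recr /= size_Mmonic ?monicXsubC ?size_XsubC ?IH1 ?addn2 ?monic_neq0 //.
by split => //; rewrite monicMr ?monicXsubC.
Qed.

Lemma fschur_zero (mu : 'I_n -> nat) (A : nat -> R) : (forall j, mu j = 0%N) ->
  fschur mu A = 1.
Proof.
move=> mu0; apply: div_vdm_eq; rewrite mul1r.
rewrite -(det_unitriangular_alternant (G := fun j => \prod_(l < n - j.+1) ('X - (A l)%:P))).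
- by congr (\det _); apply/matrixP => i j; rewrite !mxE mu0 hornerMP_fpow.
- by move=> j; have [-> _] := size_monic_fpow A (n - j.+1); case: j => j hj /=; lia.
- move=> j; have [size_j /monicP] := size_monic_fpow A (n - j.+1).
  by rewrite lead_coefE size_j.
Qed.

Lemma meval_fschur_vdm (mu : 'I_n -> nat) (A : nat -> R) (v : 'I_n -> R) :
  (fschur mu A).@[v] * (vdm R n).@[v] =
  \det (\matrix_(i < n, j < n) \prod_(l < mu j + (n - j.+1)) (v i - A l)).
Proof.
rewrite -mevalM (div_vdmK (G := fun j => \prod_(l < mu j + (n - j.+1)) ('X - (A l)%:P))).
  rewrite -det_map_mx; congr (\det _); apply/matrixP => i j.
  rewrite !mxE /fpow rmorph_prod; apply: eq_bigr => l _.
  by rewrite /= mevalB mevalXU mevalC.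
by move=> i j; rewrite mxE hornerMP_fpow.
Qed.

Lemma eq_fschur (mu : 'I_n -> nat) (A1 A2 : nat -> R) :
  A1 =1 A2 -> fschur mu A1 = fschur mu A2.
Proof.
move=> eA; rewrite /fschur; congr (div_vdm (\det _)); apply/matrixP => i j.
by rewrite !mxE /fpow; apply: eq_bigr => k _; rewrite eA.
Qed.

Definition alt_quot (k : 'I_n -> nat) : MP :=
  div_vdm (\det (\matrix_(i < n, j < n) ('X_i : MP) ^+ k j)).

Lemma alt_quotK k : alt_quot k * vdm R n = \det (\matrix_(i < n, j < n) ('X_i : MP) ^+ k j).
Proof. by apply: (div_vdmK (G := fun j => 'X^(k j))) => i j; rewrite mxE hornerMP_Xn. Qed.

Lemma alt_quot_rho : alt_quot (fun j => n - j.+1)%N = 1.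
Proof.
apply: div_vdm_eq; rewrite mul1r -(det_unitriangular_alternant (G := fun j => 'X^(n - j.+1))).
- by congr (\det _); apply/matrixP => i j; rewrite !mxE hornerMP_Xn.
- by move=> j; rewrite size_polyXn; case: j => j hj /=; lia.
- by move=> j; rewrite coefXn eqxx.
Qed.

Lemma schur_alt_quot (mu : 'I_n -> nat) :
  schur R mu = alt_quot (fun j => mu j + (n - j.+1))%N.
Proof. by []. Qed.

(* Substitute X_i := c X_i: the Vandermonde picks up c^(n choose 2), the
   alternant c^(sum k). *)
Lemma alt_quot_scale (c : R) (k : 'I_n -> nat) :
  (\prod_(i < n) \prod_(j < n | (i < j)%N) c) * (alt_quot k).@[fun _ => 0] =
  (alt_quot k).@[fun _ => 0] * \prod_(j < n) c ^+ k j.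
Proof.
pose lq := [tuple c *: ('X_i : MP) | i < n].
have hv : comp_mpoly lq (vdm R n) =
    (\prod_(i < n) \prod_(j < n | (i < j)%N) c)%:MP * vdm R n.
  rewrite /vdm rmorph_prod rmorph_prod -big_split /=; apply: eq_bigr => i _.
  rewrite rmorph_prod rmorph_prod -big_split /=; apply: eq_bigr => j _.
  by rewrite rmorphB /= !comp_mpolyXU -!tnth_nth !tnth_mktuple -scalerBr mul_mpolyC.
have hM : comp_mpoly lq (\det (\matrix_(i < n, j < n) ('X_i : MP) ^+ k j)) =
    \det (\matrix_(i < n, j < n) ('X_i : MP) ^+ k j) * (\prod_(j < n) c ^+ k j)%:MP.
  rewrite -det_map_mx.
  have -> : map_mx (comp_mpoly lq) (\matrix_(i < n, j < n) ('X_i : MP) ^+ k j) =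
      (\matrix_(i < n, j < n) ('X_i : MP) ^+ k j) *m diag_mx (\row_j (c ^+ k j)%:MP).
    apply/matrixP => i j; rewrite mul_mx_diag !mxE rmorphXn /= comp_mpolyXU -tnth_nth.
    by rewrite tnth_mktuple exprZn mulrC mul_mpolyC.
  rewrite det_mulmx det_diag rmorph_prod; congr (_ * _).
  by apply: eq_bigr => j _; rewrite mxE.
have := congr1 (comp_mpoly lq) (alt_quotK k); rewrite rmorphM /= hv hM -alt_quotK.
rewrite mulrCA mulrA [RHS]mulrAC => /(mulIf vdm_neq0) /(congr1 (meval (fun _ => 0))).
rewrite !mevalM !mevalC comp_mpoly_meval.
rewrite (@meval_eq _ _ (fun i => (tnth lq i).@[fun _ => 0]) (fun _ => 0)) //.
by move=> i; rewrite tnth_mktuple mevalZ mevalXU mulr0.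
Qed.

Lemma alt_quot_at0 (k : 'I_n -> nat) :
  (\sum_j k j != \sum_(j < n) (n - j.+1))%N -> (alt_quot k).@[fun _ => 0] = 0.
Proof.
move=> hk; have := alt_quot_scale 2%:R k.
have := alt_quot_scale 2%:R (fun j => n - j.+1)%N.
rewrite alt_quot_rho meval1 mul1r mulr1 !prodrXr => -> /eqP.
rewrite mulrC -subr_eq0 -mulrBr mulf_eq0 subr_eq0 => /orP[/eqP // | /eqP e].
case/eqP: hk; apply: (ieexprIn _ _ (esym e)); first by rewrite ltr0n.
by rewrite pnatr_eq1.
Qed.

Lemma meval0_schur (mu : 'I_n -> nat) :
  (0 < \sum_j mu j)%N -> (schur R mu).@[fun _ => 0] = 0.
Proof.
move=> mu_gt0; rewrite schur_alt_quot alt_quot_at0 // big_split /=.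
by rewrite -[X in _ != X]add0n eqn_add2r -lt0n.
Qed.

Definition shift_by1 : n.-tuple MP := [tuple ('X_i - 1) | i < n].

Lemma meval_shift_by1 (p : MP) (x : 'I_n -> R) :
  (comp_mpoly shift_by1 p).@[x] = p.@[fun i => x i - 1].
Proof.
rewrite comp_mpoly_meval; apply: meval_eq => i.
by rewrite tnth_mktuple mevalB mevalXU meval1.
Qed.

Lemma det_shifted_powers (k : 'I_n -> nat) :
  \det (\matrix_(i < n, j < n) (('X_i : MP) - 1) ^+ k j) =
  comp_mpoly shift_by1 (alt_quot k) * vdm R n.
Proof.
have vdm_shift : comp_mpoly shift_by1 (vdm R n) = vdm R n.
  rewrite /vdm rmorph_prod; apply: eq_bigr => i _.
  rewrite rmorph_prod; apply: eq_bigr => j _.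
  by rewrite rmorphB /= !comp_mpolyXU -!tnth_nth !tnth_mktuple opprB addrA subrK.
rewrite -[in RHS]vdm_shift -rmorphM /= alt_quotK -det_map_mx; congr (\det _).
by apply/matrixP => i j; rewrite !mxE rmorphXn /= comp_mpolyXU -tnth_nth tnth_mktuple.
Qed.

End AlternantQuotients.

Section JacobiCoefficients.
Variables (R : realFieldType) (a b : R).
Hypothesis a_gt_m1 : -1 < a.

Definition sigma : R := (a + b + 1) / 2%:R.

Definition jacobi1 (l : nat) : R := poch (a + 1) l / (l`!)%:R.

(* The coefficient of (t - 1)^k in p_l(t). *)
Definition jacobi_coef (l k : nat) : R :=
  jacobi1 l * ((poch (- l%:R) k * poch (l%:R + a + b + 1) k) / (poch (a + 1) k * (k`!)%:R))
    * (- 2%:R^-1) ^+ k.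

Definition sq_fpow (y : R) (k : nat) : R := \prod_(j < k) (y - (sigma + j%:R) ^+ 2).

Definition coef_denom (k : nat) : R := 2%:R ^+ k * (k`!)%:R * poch (a + 1) k.

Lemma poch_neg_nat0 l k : (l < k)%N -> poch (- l%:R) k = 0 :> R.
Proof. by move=> lk; rewrite /poch (bigD1 (Ordinal lk)) //= addNr mul0r. Qed.

Lemma poch_gt0 (c : R) k : 0 < c -> 0 < poch c k.
Proof.
move=> c_gt0; apply: prodr_gt0 => i _.
by apply: (lt_le_trans c_gt0); rewrite lerDl ler0n.
Qed.

Lemma pochD (c : R) p q : poch c (p + q) = poch c p * poch (c + p%:R) q.
Proof.
rewrite /poch big_split_ord /=; congr (_ * _); apply: eq_bigr => i _.
by rewrite natrD addrA.
Qed.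

Lemma natr_fact_addn c m : ((m + c)`!)%:R = (c`!)%:R * poch (c%:R + 1) m :> R.
Proof.
elim: m => [|m IH]; first by rewrite /poch big_ord0 mulr1.
by rewrite addSn factS natrM IH /poch big_ord_recr /= -addn1 !natrD; ring.
Qed.

(* (-l + j) (l + a + b + 1 + j) (-1) = (l + sigma)^2 - (sigma + j)^2. *)
Lemma poch_pair_sq_fpow l k :
  poch (- l%:R) k * poch (l%:R + a + b + 1) k * (-1) ^+ k = sq_fpow ((l%:R + sigma) ^+ 2) k.
Proof.
elim: k => [|k IH]; first by rewrite /poch /sq_fpow !big_ord0 !mulr1.
move: IH; rewrite /poch /sq_fpow => IH; rewrite !big_ord_recr /= -IH exprS /sigma.
by field.
Qed.

Lemma poch_a1_neq0 k : poch (a + 1) k != 0.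
Proof. by rewrite gt_eqF // poch_gt0 // -(opprK 1) subr_gt0. Qed.

Lemma natr_fact_neq0 k : (k`!)%:R != 0 :> R.
Proof. by rewrite pnatr_eq0 -lt0n fact_gt0. Qed.

Lemma coef_denom_neq0 k : coef_denom k != 0.
Proof. by rewrite !mulf_neq0 ?poch_a1_neq0 ?natr_fact_neq0 ?expf_neq0 ?pnatr_eq0. Qed.

Lemma jacobi1_neq0 l : jacobi1 l != 0.
Proof. by rewrite mulf_neq0 ?invr_eq0 ?poch_a1_neq0 ?natr_fact_neq0. Qed.

Lemma jacobi_coefE l k :
  jacobi_coef l k = jacobi1 l * sq_fpow ((l%:R + sigma) ^+ 2) k / coef_denom k.
Proof.
rewrite -poch_pair_sq_fpow /jacobi_coef /coef_denom.
have -> : (- (2%:R : R)^-1) ^+ k = (-1) ^+ k / 2%:R ^+ k.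
  by rewrite -exprVn -exprMn mulN1r.
have h1 := poch_a1_neq0 k; have h2 := @natr_fact_neq0 k.
have h3 : (2%:R : R) ^+ k != 0 by rewrite expf_neq0 // pnatr_eq0.
by field; rewrite h1 h2 h3.
Qed.

Lemma coef_denom_addn c m : coef_denom (m + c) =
  2%:R ^+ m * poch (c%:R + 1) m * poch (c%:R + a + 1) m * coef_denom c.
Proof.
rewrite /coef_denom exprD natr_fact_addn addnC pochD.
have -> : a + 1 + c%:R = c%:R + a + 1 by ring.
ring.
Qed.

Lemma jacobi_taylor1 n l K (t : {mpoly R[n]}) : (l < K)%N ->
  jacobi a b l t = \sum_(k < K) jacobi_coef l k *: (t - 1) ^+ k.
Proof.
move=> lK; rewrite /jacobi scaler_sumr.
rewrite [RHS](bigID (fun k : 'I_K => (k < l.+1)%N)) /= [X in _ = _ + X]big1 ?addr0;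
  last first.
  move=> k; rewrite -leqNgt => lk.
  by rewrite /jacobi_coef poch_neg_nat0 // !mul0r mulr0 mul0r scale0r.
rewrite (big_ord_widen K (fun k : nat => (poch (a + 1) l / (l`!)%:R) *:
   ((poch (- l%:R) k * poch (l%:R + a + b + 1) k) / (poch (a + 1) k * (k`!)%:R) *:
     ((2%:R)^-1 *: (1 - t)) ^+ k)) lK).
apply: eq_bigr => k _.
have -> : (1 - t) = (-1 : R) *: (t - 1) by rewrite scaleN1r opprB.
rewrite exprZn exprZn !scalerA /jacobi_coef /jacobi1; congr (_ *: _).
have -> : (- (2%:R : R)^-1) ^+ k = (-1) ^+ k * (2%:R^-1) ^+ k by rewrite -exprMn mulN1r.
ring.
Qed.

End JacobiCoefficients.

Lemma det_scale_rows_cols (T : comPzRingType) m (u w : 'I_m -> T) (M : 'M[T]_m) :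
  \det (\matrix_(i < m, j < m) (u i * M i j * w j)) = (\prod_i u i) * \det M * \prod_j w j.
Proof.
have -> : \matrix_(i < m, j < m) (u i * M i j * w j) =
    diag_mx (\row_i u i) *m M *m diag_mx (\row_j w j).
  by apply/matrixP => i j; rewrite mul_mx_diag mul_diag_mx !mxE.
rewrite !det_mulmx !det_diag; congr (_ * _ * _).
all: by apply: eq_bigr => i _; rewrite mxE.
Qed.

Section JacobiExpansion.
Variables (R : realFieldType) (a b : R) (n : nat) (lam : 'I_n -> nat).
Hypotheses (a_gt_m1 : -1 < a) (b_gt_m1 : -1 < b) (lam_part : is_partition lam).
Notation MP := {mpoly R[n]}.

(* l_j of the statement (0-based j), and the node sequence sigma^2, (sigma+1)^2, ... *)
Definition lshift (j : 'I_n) : R := (lam j)%:R + (n - j.+1)%:R + sigma a b.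
Definition sigma_sq (k : nat) : R := (sigma a b + k%:R) ^+ 2.

Lemma IevalE mu :
  Ieval mu (fun i => (lam i)%:R) ((a + b + 1) / 2%:R + n%:R) =
  (fschur mu sigma_sq).@[fun i => lshift i ^+ 2].
Proof.
rewrite /Ieval (@eq_fschur R n mu _ sigma_sq); last by move=> k; rewrite /sigma_sq /sigma addrK.
by apply: meval_eq => i; rewrite /lshift /sigma natrB ?ltn_ord //; ring.
Qed.

Lemma lshift_gap (i j : 'I_n) : (i < j)%N -> lshift j + 1 <= lshift i.
Proof.
move=> ij.
have le_lam : (lam j)%:R <= (lam i)%:R :> R.
  by rewrite ler_nat; exact: implyP (forallP (forallP lam_part i) j) (ltnW ij).
have le_rho : (n - j.+1)%:R + 1 <= (n - i.+1)%:R :> R.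
  by rewrite natr1 ler_nat; have := ltn_ord j; lia.
by rewrite /lshift; lra.
Qed.

Lemma lshift_sum_gt0 (i j : 'I_n) : (i < j)%N -> 0 < lshift i + lshift j.
Proof.
move=> ij; have gap := lshift_gap ij.
have sigma_le : sigma a b <= lshift j by rewrite /lshift lerDr addr_ge0.
have two_sigma : sigma a b + sigma a b = a + b + 1 by rewrite /sigma; field.
by move: a_gt_m1 b_gt_m1; lra.
Qed.

Definition vdm_lshift_sq : R := (vdm R n).@[fun i => lshift i ^+ 2].

Lemma vdm_lshift_sq_neq0 : vdm_lshift_sq != 0.
Proof.
rewrite /vdm_lshift_sq /vdm rmorph_prod; apply/prodf_neq0 => i _.
rewrite rmorph_prod; apply/prodf_neq0 => j ij.
rewrite /= mevalB !mevalXU subr_sqr mulf_neq0 //.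
  by rewrite subr_eq0 gt_eqF //; have := lshift_gap ij; lra.
by rewrite gt_eqF // lshift_sum_gt0.
Qed.

Variable N : nat.
Hypothesis lam_le_N : forall j, (lam j <= N)%N.

Definition lam_rho (j : 'I_n) : nat := (lam j + (n - j.+1))%N.

Lemma lam_rho_lt j : (lam_rho j < N + n)%N.
Proof. by rewrite /lam_rho; have := lam_le_N j; have := ltn_ord j; lia. Qed.

Definition pow_mx : 'M[MP]_(n, N + n) := \matrix_(i < n, k < N + n) (('X_i : MP) - 1) ^+ k.
Definition coef_mx : 'M[R]_(N + n, n) := \matrix_(k < N + n, j < n) jacobi_coef a b (lam_rho j) k.

Lemma JacobiP_vdm : JacobiP a b lam * vdm R n = \det (pow_mx *m map_mx (@mpolyC n R) coef_mx).
Proof.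
rewrite /JacobiP; have -> : \det (\matrix_(i < n, j < n) jacobi a b (lam i + (n - i.+1)) ('X_j : MP)) =
    \det (pow_mx *m map_mx (@mpolyC n R) coef_mx).
  rewrite -det_tr; congr (\det _); apply/matrixP => i j; rewrite !mxE.
  rewrite (jacobi_taylor1 _ _ _ (lam_rho_lt j)); apply: eq_bigr => k _.
  by rewrite !mxE mulrC mul_mpolyC.
apply: (div_vdmK (G := fun j => \sum_(k < N + n) jacobi_coef a b (lam_rho j) k *: ('X - 1) ^+ k)).
move=> i j; rewrite hornerMP_sum_shift !mxE; apply: eq_bigr => k _.
by rewrite !mxE mulrC mul_mpolyC.
Qed.

Lemma alt_quot_shift_part (m : {ffun 'I_n -> 'I_N.+1}) :
  alt_quot R (fun j => shift_part m j) = schur R (ffnat m).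
Proof.
rewrite /schur /alt_quot; congr (div_vdm (\det _)).
by apply/matrixP => i j; rewrite !mxE shift_partE.
Qed.

Definition coef_minor (m : {ffun 'I_n -> 'I_N.+1}) : R := \det (rowsub (shift_part m) coef_mx).

Lemma meval_JacobiP (x : 'I_n -> R) : (JacobiP a b lam).@[x] =
  \sum_(m : {ffun 'I_n -> 'I_N.+1} | is_partition (ffnat m))
     coef_minor m * (schur R (ffnat m)).@[fun i => x i - 1].
Proof.
have JacobiP_sum : JacobiP a b lam =
    \sum_(g : {ffun 'I_n -> 'I_(N + n)} | strict_decr g)
      (\det (rowsub g coef_mx))%:MP * comp_mpoly (shift_by1 R n) (alt_quot R (fun j => g j)).
  apply: (mulIf (@vdm_neq0 R n)); rewrite JacobiP_vdm cauchy_binet big_distrl /=.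
  apply: eq_bigr => g _.
  have -> : colsub g pow_mx = \matrix_(i < n, j < n) (('X_i : MP) - 1) ^+ g j.
    by apply/matrixP => i j; rewrite !mxE.
  have -> : rowsub g (map_mx (@mpolyC n R) coef_mx) = map_mx (@mpolyC n R) (rowsub g coef_mx).
    by apply/matrixP => i j; rewrite !mxE.
  by rewrite det_shifted_powers det_map_mx mulrC mulrA.
rewrite JacobiP_sum raddf_sum /= sum_strict_decr_partition; apply: eq_bigr => m _.
by rewrite mevalM mevalC meval_shift_by1 alt_quot_shift_part.
Qed.

Definition jacobi1_prod : R := \prod_(j < n) jacobi1 a (lam_rho j).

(* Row j of the minor carries 1 / coef_denom (g j), column j carries p_(lam_rho j)(1);
   what remains is the factorial alternant at the points lshift^2. *)
Lemma coef_minorE (m : {ffun 'I_n -> 'I_N.+1}) :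
  coef_minor m = (\prod_(j < n) (coef_denom a (shift_part m j))^-1) *
     (Ieval (ffnat m) (fun i => (lam i)%:R) ((a + b + 1) / 2%:R + n%:R) * vdm_lshift_sq) *
     jacobi1_prod.
Proof.
rewrite /coef_minor.
have -> : rowsub (shift_part m) coef_mx = \matrix_(j < n, j' < n)
    ((coef_denom a (shift_part m j))^-1 *
     (\matrix_(j0 < n, j1 < n) sq_fpow a b (lshift j1 ^+ 2) (shift_part m j0)) j j' *
     jacobi1 a (lam_rho j')).
  by apply/matrixP => j j'; rewrite !mxE jacobi_coefE // /lshift /lam_rho natrD; ring.
rewrite det_scale_rows_cols IevalE -det_tr /vdm_lshift_sq meval_fschur_vdm.
congr (_ * \det _ * _); apply/matrixP => i j; rewrite !mxE shift_partE /sq_fpow.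
by apply: eq_bigr => l _.
Qed.

Lemma schur_part0 : schur R (ffnat (part0 n N)) = 1.
Proof.
rewrite -(alt_quot_rho R n) /schur /alt_quot; congr (div_vdm (\det _)).
by apply/matrixP => i j; rewrite !mxE /ffnat ffunE.
Qed.

Lemma meval1_JacobiP : (JacobiP a b lam).@[fun _ => 1] = coef_minor (part0 n N).
Proof.
have at0 (m : {ffun 'I_n -> 'I_N.+1}) :
    (schur R (ffnat m)).@[fun i => 1 - 1] = (schur R (ffnat m)).@[fun _ => 0].
  by apply: meval_eq => i; rewrite subrr.
rewrite meval_JacobiP (bigD1 (part0 n N) (is_partition0 n N)) /= big1 ?addr0.
  by rewrite at0 schur_part0 meval1 mulr1.
by move=> m /andP[_ hm]; rewrite at0 meval0_schur ?mulr0 // sum_part_gt0.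
Qed.

Lemma Ieval_part0 :
  Ieval (ffnat (part0 n N)) (fun i => (lam i)%:R) ((a + b + 1) / 2%:R + n%:R) = 1.
Proof. by rewrite IevalE fschur_zero ?meval1 // => j; rewrite /ffnat ffunE. Qed.

Lemma coef_denom_prod (m : {ffun 'I_n -> 'I_N.+1}) :
  \prod_(j < n) coef_denom a (shift_part m j) =
  cnorm (ffnat m) a * \prod_(j < n) coef_denom a (n - j.+1).
Proof.
rewrite /cnorm -prodrXr -!big_split /=; apply: eq_bigr => j _.
by rewrite shift_partE coef_denom_addn /ffnat; ring.
Qed.

Lemma JacobiP_ratio_expansion (x : 'I_n -> R) :
  (JacobiP a b lam).@[x] / (JacobiP a b lam).@[fun _ => 1] =
  \sum_(m : {ffun 'I_n -> 'I_N.+1} | is_partition (ffnat m))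
     Ieval (ffnat m) (fun i => (lam i)%:R) ((a + b + 1) / 2%:R + n%:R)
     * (schur R (ffnat m)).@[fun i => x i - 1] / cnorm (ffnat m) a.
Proof.
rewrite meval1_JacobiP meval_JacobiP mulr_suml; apply: eq_bigr => m _.
rewrite (coef_minorE m) (coef_minorE (part0 n N)) Ieval_part0 !prodfV coef_denom_prod.
have -> : \prod_(j < n) coef_denom a (shift_part (part0 n N) j) =
    \prod_(j < n) coef_denom a (n - j.+1).
  by apply: eq_bigr => j _; rewrite shift_partE /ffnat ffunE.
have rho_neq0 : \prod_(j < n) coef_denom a (n - j.+1) != 0.
  by apply/prodf_neq0 => j _; exact: coef_denom_neq0.
have cnorm_neq0 : cnorm (ffnat m) a != 0.
  apply/eqP => c0.
  have : \prod_(j < n) coef_denom a (shift_part m j) != 0.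
    by apply/prodf_neq0 => j _; exact: coef_denom_neq0.
  by rewrite coef_denom_prod c0 mul0r eqxx.
have jac1_neq0 : jacobi1_prod != 0 by apply/prodf_neq0 => j _; exact: jacobi1_neq0.
by field; rewrite vdm_lshift_sq_neq0 jac1_neq0 rho_neq0 cnorm_neq0.
Qed.

End JacobiExpansion.

Theorem proposition7p4 (R : realFieldType) (a b : R) (n : nat)
    (lam : 'I_n -> nat) :
  -1 < a -> -1 < b -> (1 <= n)%N -> is_partition lam ->
  (forall x : 'I_n -> R,
    exists N0 : nat, forall N : nat, (N0 <= N)%N ->
      (JacobiP a b lam).@[x] / (JacobiP a b lam).@[fun _ => 1] =
      \sum_(m : {ffun 'I_n -> 'I_N.+1} | is_partition (ffnat m))
         Ieval (ffnat m) (fun i => (lam i)%:R) ((a + b + 1) / 2%:R + n%:R)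
         * (schur R (ffnat m)).@[fun i => x i - 1]
         / cnorm (ffnat m) a)
  /\
  (forall mu : 'I_n -> nat, is_partition mu ->
    Ieval mu (fun i => (lam i)%:R) ((a + b + 1) / 2%:R + n%:R) =
    (fschur mu (fun k => ((a + b + 1) / 2%:R + k%:R) ^+ 2)).@[
       fun i => ((lam i)%:R + (n - i.+1)%:R + (a + b + 1) / 2%:R) ^+ 2]).
Proof.
move=> a_gt_m1 b_gt_m1 _ lam_part; split=> [x | mu _]; last exact: IevalE.
exists (\max_(j < n) lam j) => N le_max_N.
apply: JacobiP_ratio_expansion => // j.
exact: leq_trans (leq_bigmax j) le_max_N.
Qed.
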